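(* Let $\mathcal{H}$ be finite-dimensional, $\mathscr{A}\subseteq\mathfrak{B}(\mathcal{H})$ a $*$-subalgebra, $\mathcal{L}:\mathscr{A}\to\mathscr{A}$ a Lindblad generator, $\mathfrak{S}\subseteq\mathfrak{D}(\mathcal{H})\cap\mathscr{A}$ a set of initial states, and $\mathscr{R}=\mathrm{span}\{e^{\mathcal{L}t}(\rho_0):t\ge0,\rho_0\in\mathfrak{S}\}$ the reachable subspace. Let $\mathscr{V}$ be an operator subspace with $\mathscr{R}\subseteq\mathscr{V}$, let $\Pi_{\mathscr{V}}$ be a (not necessarily orthogonal) projection superoperator onto $\mathscr{V}$, and let $\mathcal{R},\mathcal{J}$ be full-rank factors of $\Pi_\mathscr{V}$, i.e. $\mathcal{R}$ maps onto a space $\mathcal{X}$ with $\dim\mathcal{X}=\dim\mathscr{V}$, $\mathcal{J}:\mathcal{X}\to\mathscr{V}$, $\mathcal{J}\mathcal{R}=\Pi_\mathscr{V}$ and $\mathcal{R}\mathcal{J}=\mathcal{I}$ (identity on $\mathcal{X}$). Define $\mathcal{F}_L\equiv\mathcal{R}\mathcal{L}\mathcal{J}$. Then $$e^{\mathcal{L}t}(\rho_0)=\mathcal{J}e^{\mathcal{F}_Lt}\mathcal{R}(\rho_0)\qquad\forall t\ge0,\ \forall\rho_0\in\mathfrak{S}.$$ Moreover, $\mathscr{V}=\mathscr{R}$ is an operator subspace of minimal dimension for which this identity holds.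
   Context: A Lindblad generator has the form $\mathcal{L}(\rho)=-i[H,\rho]+\sum_u\big(L_u\rho L_u^\dagger-\tfrac12\{L_u^\dagger L_u,\rho\}\big)$ with $H=H^\dagger$. $\mathfrak{D}(\mathcal{H})$ is the set of density operators on $\mathcal{H}$. A projection superoperator is an idempotent linear map on the operator space with image $\mathscr{V}$. *)

From HB Require Import structures.
From mathcomp Require Import all_boot all_order all_algebra.
From mathcomp Require Import complex.
From mathcomp Require Import all_classical all_reals all_analysis.
Set Implicit Arguments. Unset Strict Implicit. Unset Printing Implicit Defensive.
Import Order.TTheory GRing.Theory Num.Theory.
Import numFieldNormedType.Exports.
Local Open Scope ring_scope.
Local Open Scope complex_scope.
Local Open Scope classical_set_scope.

Section Defs.
Variable R : realType.
Local Notation C := (R[i]).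

Definition adjmx (m n : nat) (A : 'M[C]_(m, n)) : 'M[C]_(n, m) :=
  (map_mx Num.conj A)^T.

Definition herm_mx (n : nat) (A : 'M[C]_n) : Prop := adjmx A = A.

Definition psd_mx (n : nat) (A : 'M[C]_n) : Prop :=
  forall v : 'cV[C]_n, 0 <= (adjmx v *m A *m v) 0 0.

Definition density (n : nat) (rho : 'M[C]_n) : Prop :=
  [/\ herm_mx rho, psd_mx rho & \tr rho = 1].

Definition star_subalgebra (n : nat) (A : {vspace 'M[C]_n}) : Prop :=
  (forall x y, x \in A -> y \in A -> x * y \in A) /\
  (forall x, x \in A -> adjmx x \in A).

Definition lindblad (n : nat) (Hm : 'M[C]_n) (Ls : seq 'M[C]_n)
    (rho : 'M[C]_n) : 'M[C]_n :=
  - 'i *: (Hm * rho - rho * Hm) +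
  \sum_(Lu <- Ls) (Lu * rho * adjmx Lu
                   - (1 / 2%:R) *: (adjmx Lu * Lu * rho + rho * (adjmx Lu * Lu))).

Definition sexp (m n : nat) (f : 'M[C]_(m, n) -> 'M[C]_(m, n)) (t : R)
    (x : 'M[C]_(m, n)) : 'M[C]_(m, n) :=
  lim ((fun N : nat => \sum_(k < N) ((t ^+ k / (k`!)%:R)%:C *: iter k f x)) @ \oo).

Definition reach_span (n : nat) (L : 'M[C]_n -> 'M[C]_n) (S : set 'M[C]_n)
    (x : 'M[C]_n) : Prop :=
  exists (k : nat) (c : 'I_k -> C) (ts : 'I_k -> R) (rs : 'I_k -> 'M[C]_n),
    (forall i, 0 <= ts i /\ S (rs i)) /\
    x = \sum_(i < k) c i *: sexp L (ts i) (rs i).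

Definition proj_factors (n : nat) (V : {vspace 'M[C]_n})
    (P : {linear 'M[C]_n -> 'M[C]_n})
    (Rf : {linear 'M[C]_n -> 'rV[C]_(\dim V)})
    (Jf : {linear 'rV[C]_(\dim V) -> 'M[C]_n}) : Prop :=
  [/\ (forall x, P (P x) = P x),
      (forall x, P x \in V),
      (forall v, v \in V -> exists x, P x = v) &
      [/\ (forall y, Jf y \in V),
      (forall x, Jf (Rf x) = P x) &
      (forall y, Rf (Jf y) = y)]].

Definition reduction_exact (n : nat) (L : 'M[C]_n -> 'M[C]_n) (S : set 'M[C]_n)
    (V : {vspace 'M[C]_n})
    (Rf : {linear 'M[C]_n -> 'rV[C]_(\dim V)})
    (Jf : {linear 'rV[C]_(\dim V) -> 'M[C]_n}) : Prop :=
  forall (t : R) (rho0 : 'M[C]_n), 0 <= t -> S rho0 ->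
    sexp L t rho0 = Jf (sexp (fun y => Rf (L (Jf y))) t (Rf rho0)).

End Defs.

(* If e^{Lt} x stays in a subspace U for all t > 0, then so do the Krylov
   vectors L^k x: with Phi = 1 - projv U, the series sum_k t^k/k! Phi (L^k x)
   vanishes for every t > 0 and has geometrically bounded coefficients, which
   must therefore all vanish.  Since J R is the identity on V, which contains
   the reachable space, R L^k rho0 = F_L^k R rho0, so e^{F_L t} R rho0 =
   R e^{Lt} rho0 by continuity of R, and applying J gives the identity.
   Conversely, an exact reduction through W puts every e^{Lt} rho0 in the range
   of J, inside W, so the reachable space is contained in W; coordinates in a
   basis of the reachable space give factors of exactly that dimension.
   The exponential series converge because complex matrices form a complete
   space (through the real and imaginary parts of the entries) on which linear
   maps are bounded. *)

From HB Require Import structures.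
From mathcomp Require Import all_boot all_order all_algebra.
From mathcomp Require Import complex.
From mathcomp Require Import all_classical all_reals all_analysis.
From mathcomp Require Import ring.
Set Implicit Arguments. Unset Strict Implicit. Unset Printing Implicit Defensive.
Import Order.TTheory GRing.Theory Num.Theory.
Import numFieldNormedType.Exports.
Local Open Scope ring_scope.
Local Open Scope complex_scope.
Local Open Scope classical_set_scope.

Lemma le0_of_le_mul_small (R : realFieldType) (x K : R) :
  (forall t, 0 < t <= 1 -> x <= t * K) -> x <= 0.
Proof.
move=> xK; have [K0|K0] := leP K 0.
  by have := xK 1; rewrite ltr01 lexx mul1r => /(_ isT) /le_trans; apply.
apply/ler_addgt0Pr => e e0; rewrite add0r.
pose t := Num.min 1 (e / K).
have t0 : 0 < t by rewrite lt_min ltr01 divr_gt0.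
apply: le_trans (xK t _) _; first by rewrite t0 ge_min lexx.
by rewrite -ler_pdivlMr // ge_min lexx orbT.
Qed.

Section ComplexMatrices.
Variable R : realType.
Local Notation C := R[i].
Local Notation Re := (@complex.Re R).
Local Notation Im := (@complex.Im R).
Local Notation mx p q := ('M[C]_(p, q) : normedModType C).

Lemma normc_ge_Im (z : C) : `|Im z|%:C <= `|z|.
Proof.
rewrite normc_def lecR -sqrtr_sqr; apply: ler_wsqrtr.
by rewrite lerDr sqr_ge0.
Qed.

Lemma normc_le_ReIm (z : C) : `|z| <= (`|Re z| + `|Im z|)%:C.
Proof.
rewrite normc_def lecR -[leRHS]ger0_norm ?addr_ge0 // -sqrtr_sqr.
apply: ler_wsqrtr.
rewrite sqrrD !real_normK ?num_real // addrAC lerDl.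
by rewrite mulrn_wge0 // mulr_ge0.
Qed.

Lemma mx_norm_entry_le p q (M : mx p q) i j : `|M i j| <= `|M|.
Proof.
rewrite [leRHS]/Num.norm /= mx_normE -[leLHS]nngE num_le.
by apply: (le_bigmax _ _ (i, j)).
Qed.

Lemma mx_norm_lt p q (M : mx p q) (e : C) :
  0 < e -> (forall i j, `|M i j| < e) -> `|M| < e.
Proof.
move=> e0 Me; have := congr1 (fun b => b 0 e M) (@mx_norm_ball C p q).
rewrite /ball_ /= sub0r normrN => <-.
by split => // i j; rewrite /ball /= mxE sub0r normrN.
Qed.

Lemma cvg_mx_ReIm p q (F : set_system (mx p q)) (a b : 'I_p -> 'I_q -> R) :
  Filter F ->
  (forall i j, (fun M : mx p q => Re (M i j)) @ F --> a i j) ->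
  (forall i j, (fun M : mx p q => Im (M i j)) @ F --> b i j) ->
  F --> (\matrix_(i, j) (a i j +i* b i j) : mx p q).
Proof.
move=> FF Fa Fb; apply/cvgrPdist_lt => e e0.
have e_real : (Re e)%:C = e by rewrite RRe_real ?gtr0_real.
have e2 : 0 < Re e / 2 by rewrite divr_gt0 // -ltcR e_real.
have near_entries : F [set M : mx p q | forall ij : 'I_p * 'I_q,
    `|a ij.1 ij.2 - Re (M ij.1 ij.2)| < Re e / 2 /\
    `|b ij.1 ij.2 - Im (M ij.1 ij.2)| < Re e / 2].
  apply: filter_forall => -[i j] /=.
  by near=> M; split; near: M; apply: cvgr_dist_lt.
apply: filterS near_entries => M M_entries; apply: mx_norm_lt => // i j.
have [+ +] := M_entries (i, j); rewrite !mxE; case: (M i j) => x y /= Re_lt Im_lt.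
apply: le_lt_trans (normc_le_ReIm _) _.
by rewrite -e_real ltcR (splitr (Re e)) /= ltrD.
Unshelve. all: by end_near. Qed.

Lemma normc_ReB (z w : C) : `|Re z - Re w|%:C <= `|z - w|.
Proof. by case: z w => a b [c d]; apply: (normc_ge_Re (_ +i* _)). Qed.

Lemma normc_ImB (z w : C) : `|Im z - Im w|%:C <= `|z - w|.
Proof. by case: z w => a b [c d]; apply: (normc_ge_Im (_ +i* _)). Qed.

Lemma cvg_mx_entry_of_cauchy p q (F : set_system (mx p q)) (g : C -> R) i j :
  ProperFilter F -> (forall z w, `|g z - g w|%:C <= `|z - w|) ->
  cauchy F -> cvg ((fun M : mx p q => g (M i j)) @ F).
Proof.
move=> FF g_lip /cauchyP Fc; apply: cauchy_cvg; apply: cauchy_exP => e e0.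
have [M0 FM0] : exists M0, F (ball M0 e%:C) by apply: Fc; rewrite ltcR.
exists (g (M0 i j)); apply: (@filterS _ F _ _ _ _ FM0) => M /=.
rewrite -!ball_normE /ball_ /= => M0M; rewrite -ltcR.
apply: le_lt_trans (g_lip _ _) _; apply: le_lt_trans M0M.
by have := mx_norm_entry_le (M0 - M) i j; rewrite !mxE.
Qed.

Lemma mx_cauchy_cvg p q (F : set_system (mx p q)) :
  ProperFilter F -> cauchy F -> cvg F.
Proof.
move=> FF Fc; apply/cvg_ex; eexists.
apply: (cvg_mx_ReIm (a := fun i j => lim ((fun M : mx p q => Re (M i j)) @ F))
                    (b := fun i j => lim ((fun M : mx p q => Im (M i j)) @ F)))
  => i j; apply: cvg_mx_entry_of_cauchy => //; [exact: normc_ReB | exact: normc_ImB].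
Qed.

Lemma RRe_norm (V : normedZmodType C) (x : V) : (Re `|x|)%:C = `|x|.
Proof. by rewrite RRe_real // ger0_real. Qed.

Lemma cvg_series_dominated p q (u : (mx p q)^nat) (w : R^nat) :
  (forall k, `|u k| <= (w k)%:C) -> cvgn (series w) -> cvgn (series u).
Proof.
move=> uw /cauchy_cvgP/cauchy_seriesP w_cauchy.
apply: mx_cauchy_cvg; apply/cauchy_seriesP => e e0.
have e_real : (Re e)%:C = e by rewrite RRe_real ?gtr0_real.
have := w_cauchy (Re e); rewrite -ltcR e_real => /(_ e0).
apply: filterS => -[m n] /= w_lt; apply: le_lt_trans (ler_norm_sum _ _ _) _.
apply: le_lt_trans (ler_sum _ (fun k _ => uw k)) _.
by rewrite -rmorph_sum -e_real ltcR (le_lt_trans (ler_norm _)).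
Qed.

Lemma series_exp_coeff_le_expR (c : R) N :
  0 <= c -> series (exp_coeff c) N <= expR c.
Proof.
move=> c0; apply: nondecreasing_cvgn_le; last exact: is_cvg_series_exp_coeff.
by apply: nondecreasing_series => k _ _; exact: exp_coeff_ge0.
Qed.

Definition exp_terms (V : lmodType C) (f : V -> V) (t : R) (x : V) : V^nat :=
  fun k => (exp_coeff t k)%:C *: iter k f x.

Lemma iter_norm_le (V : normedModType C) (f : V -> V) (c : R) :
  0 <= c -> (forall x, `|f x| <= c%:C * `|x|) ->
  forall k x, `|iter k f x| <= (c ^+ k)%:C * `|x|.
Proof.
move=> c0 fc; elim=> [|k IH] x /=; first by rewrite expr0 mul1r.
by apply: le_trans (fc _) _; rewrite exprS rmorphM -mulrA ler_wpM2l ?ler0c.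
Qed.

Lemma normr_realC (r : R) : `|r%:C| = `|r|%:C.
Proof. by rewrite normc_def /= expr0n /= addr0 sqrtr_sqr. Qed.

Lemma exp_terms_norm_le (V : normedModType C) (f : V -> V) (c t : R) x k :
  0 <= c -> (forall x, `|f x| <= c%:C * `|x|) ->
  `|exp_terms f t x k| <= (Re `|x| * exp_coeff (`|t| * c) k)%:C.
Proof.
move=> c0 fc; rewrite /exp_terms normrZ normr_realC.
apply: le_trans (ler_wpM2l _ (iter_norm_le c0 fc k x)) _; first by rewrite ler0c.
rewrite mulrA -[`|x| in leLHS]RRe_norm -!rmorphM lecR [leRHS]mulrC ler_wpM2r //.
  by rewrite -ler0c RRe_norm.
by rewrite !exp_coeffE /= normrM normfV normr_nat normrX exprMn mulrA.
Qed.

Lemma linear_mx_bounded p q (V : normedModType C)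
    (f : {linear 'M[C]_(p, q) -> V}) :
  exists2 c : R, 0 <= c & forall x, `|f x| <= c%:C * `|x|.
Proof.
pose c := \sum_(i < p) \sum_(j < q) `|f (delta_mx i j)|.
have c0 : 0 <= c by rewrite sumr_ge0 // => i _; rewrite sumr_ge0.
exists (Re c); first by rewrite -ler0c RRe_real ?ger0_real.
move=> x; rewrite RRe_real ?ger0_real // {1}(matrix_sum_delta x) linear_sum mulr_suml.
apply: le_trans (ler_norm_sum _ _ _) _; apply: ler_sum => i _.
rewrite linear_sum mulr_suml.
apply: le_trans (ler_norm_sum _ _ _) _; apply: ler_sum => j _.
by rewrite linearZ normrZ mulrC ler_wpM2l // mx_norm_entry_le.
Qed.

Lemma linear_mx_continuous p q (V : normedModType C)
    (f : {linear 'M[C]_(p, q) -> V}) : continuous (f : mx p q -> V).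
Proof.
have [c c0 fc] := linear_mx_bounded f.
apply/bounded_linear_continuous/linear_boundedP.
near=> r => x; apply: le_trans (fc x) _; rewrite ler_wpM2r //.
by near: r; apply: nbhs_pinfty_ge; rewrite ger0_real ?ler0c.
Unshelve. all: by end_near. Qed.

Lemma cvg_sexp p q (f : {linear 'M[C]_(p, q) -> 'M[C]_(p, q)}) t x :
  series (exp_terms f t x) @ \oo --> (sexp f t x : mx p q).
Proof.
have [c c0 fc] := linear_mx_bounded f.
have : cvgn (series (exp_terms f t x)).
  apply: (@cvg_series_dominated _ _ _ (Re `|x| *: exp_coeff (`|t| * c))).
    by move=> k; apply: exp_terms_norm_le.
  exact/is_cvg_seriesZ/is_cvg_series_exp_coeff.
by rewrite seriesEord.
Qed.

Section ExpSeriesCoefficients.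
Variables (V : normedModType C) (b : V^nat) (B c : R).
Hypotheses (c0 : 0 <= c) (b_bound : forall k, `|b k| <= (B * c ^+ k)%:C).

Let u t k := (exp_coeff t k)%:C *: b k.

Lemma exp_series_tail_le t j N : 0 < t <= 1 ->
  `|\sum_(j.+1 <= k < N) u t k| <= (t ^+ j.+1 * (B * expR c))%:C.
Proof.
case/andP => t0 t1.
have B0 : 0 <= B by have := le_trans (normr_ge0 _) (b_bound 0); rewrite expr0 mulr1 ler0c.
apply: le_trans (ler_norm_sum _ _ _) _.
apply: (@le_trans _ _ (\sum_(j.+1 <= k < N) (t ^+ j.+1 * (B * exp_coeff c k))%:C)).
  apply: ler_sum_nat => k /andP[jk _].
  rewrite /u normrZ normr_realC.
  apply: le_trans (ler_wpM2l _ (b_bound k)) _; first by rewrite ler0c.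
  rewrite -rmorphM lecR ger0_norm ?exp_coeff_ge0 ?(ltW t0) // !exp_coeffE /=.
  have -> : k`!%:R^-1 * t ^+ k * (B * c ^+ k) = t ^+ k * (B * (k`!%:R^-1 * c ^+ k)).
    by ring.
  apply: ler_wpM2r; first by rewrite !mulr_ge0 ?invr_ge0 ?exprn_ge0.
  exact: ler_wiXn2l (ltW t0) t1 _ _ jk.
rewrite -rmorph_sum lecR -!mulr_sumr; apply: ler_wpM2l; first exact/exprn_ge0/ltW.
apply: ler_wpM2l => //; case: (leqP j.+1 N) => jN.
  rewrite -sub_series_geq // lerBlDr; apply: le_trans (series_exp_coeff_le_expR N c0) _.
  by rewrite lerDl sumr_ge0 // => k _; exact: exp_coeff_ge0.
by rewrite big_geq ?expR_ge0 // ltnW.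
Qed.

Lemma exp_series_coef_eq0 :
  (forall t, 0 < t -> series (fun k => (exp_coeff t k)%:C *: b k) @ \oo --> 0) ->
  forall k, b k = 0.
Proof.
move=> series0; elim/ltn_ind => j IH.
(* The j-th term, of order t^j, dominates the rest of the series as t -> 0+. *)
pose K := j`!%:R * (1 + B * expR c).
have bj_small t : 0 < t <= 1 -> Re `|b j| <= t * K.
  case/andP => t0 t1.
  have tj0 : 0 < (t ^+ j.+1)%:C by rewrite ltcR exprn_gt0.
  have [N0 _ N0_lt] := (cvgrPdist_lt _ _).1 (series0 t t0) _ tj0.
  pose N := maxn N0 j.+1.
  have := N0_lt N (leq_maxl _ _); rewrite /= sub0r normrN => sN_lt.
  have series_split : series (u t) N = u t j + \sum_(j.+1 <= k < N) u t k.
    have series_j0 : series (u t) j = 0.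
      rewrite /series /= big_nat_cond big1 // => k /andP[/andP[_ kj] _].
      by rewrite /u IH // scaler0.
    rewrite -[LHS](subrK (series (u t) j.+1)) sub_series_geq ?leq_maxr //.
    by rewrite seriesSr series_j0 add0r addrC.
  have uj_le : `|u t j| <= (t ^+ j.+1 * (1 + B * expR c))%:C.
    rewrite (_ : u t j = series (u t) N - \sum_(j.+1 <= k < N) u t k).
      apply: le_trans (ler_normB _ _) _; rewrite mulrDr mulr1 rmorphD.
      by apply: lerD; [exact: ltW | apply: exp_series_tail_le; rewrite t0].
    by rewrite series_split addrK.
  move: uj_le; rewrite /u normrZ normr_realC -RRe_norm -rmorphM lecR.
  rewrite ger0_norm ?exp_coeff_ge0 ?(ltW t0) // exp_coeffE /=.
  rewrite exprSr -mulrA (mulrC _ (t ^+ j)) -mulrA ler_pM2l ?exprn_gt0 //.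
  rewrite mulrC ler_pdivrMr ?ltr0n ?fact_gt0 //.
  by have -> : t * K = t * (1 + B * expR c) * j`!%:R by rewrite /K; ring.
apply/normr0_eq0; rewrite -RRe_norm.
have -> : Re `|b j| = 0.
  by apply/le_anti; rewrite (le0_of_le_mul_small bj_small) -ler0c RRe_norm /=.
exact: rmorph0.
Qed.

End ExpSeriesCoefficients.

Section Lindblad.
Variables (n : nat) (Hm : 'M[C]_n) (Ls : seq 'M[C]_n).

Lemma lindblad_is_linear : linear (lindblad Hm Ls).
Proof.
move=> a x y; rewrite /lindblad [in RHS]scalerDr addrACA scaler_sumr -big_split /=.
rewrite -!mulmxE; congr (_ + _).
  rewrite mulmxDr mulmxDl -scalemxAr -scalemxAl opprD addrACA -scalerBr.
  by rewrite scalerDr !scalerA mulrC.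
apply: eq_bigr => Lu _.
rewrite !mulmxDr !mulmxDl -!scalemxAr -!scalemxAl [X in _ - _ *: X]addrACA -scalerDr.
set h := (1 / 2%:R : C).
by rewrite [h *: _]scalerDr scalerA mulrC -scalerA opprD addrACA -scalerBr.
Qed.

HB.instance Definition _ := GRing.isLinear.Build C 'M[C]_n 'M[C]_n *:%R
  (lindblad Hm Ls) lindblad_is_linear.
End Lindblad.

Lemma sexpE p q (f : 'M[C]_(p, q) -> 'M[C]_(p, q)) t x :
  sexp f t x = limn (series (exp_terms f t x)).
Proof. by rewrite seriesEord. Qed.

Lemma linear_series (U W : lmodType C) (g : {linear U -> W}) (u : U^nat) :
  g \o series u = series (g \o u).
Proof. by apply/funext => N; rewrite /series /= linear_sum. Qed.

Lemma cvg_linear_sexp p q p' q' (g : {linear 'M[C]_(p, q) -> 'M[C]_(p', q')})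
    (f : {linear 'M[C]_(p, q) -> 'M[C]_(p, q)}) t x :
  series (g \o exp_terms f t x) @ \oo --> (g (sexp f t x) : mx p' q').
Proof.
rewrite -linear_series.
exact: continuous_cvg _ (@linear_mx_continuous _ _ (mx p' q') g _)
  (@cvg_sexp _ _ f t x).
Qed.

Lemma iter_memv_of_sexp_memv p q (U : {vspace 'M[C]_(p, q)})
    (f : {linear 'M[C]_(p, q) -> 'M[C]_(p, q)}) x :
  (forall t, 0 < t -> sexp f t x \in U) -> forall k, iter k f x \in U.
Proof.
move=> orbitU k.
pose Phi : 'End('M[C]_(p, q)) := (\1 - projv U)%VF.
have Phi0 y : (Phi y == 0) = (y \in U).
  rewrite add_lfunE opp_lfunE id_lfunE subr_eq0 eq_sym.
  by apply/eqP/idP => [<-|/projv_id //]; exact: memv_proj.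
have [cP cP0 Phi_bound] := linear_mx_bounded (V := mx p q) (fun_of_lfun Phi).
have [c c0 f_bound] := linear_mx_bounded f.
rewrite -Phi0; apply/eqP; move: k.
apply: (exp_series_coef_eq0 (B := cP * Re `|x|) c0) => [k|t t0].
  apply: le_trans (Phi_bound _) _.
  apply: le_trans (ler_wpM2l _ (iter_norm_le c0 f_bound k x)) _; first by rewrite ler0c.
  by rewrite mulrA -[`|x|]RRe_norm -!rmorphM mulrAC.
have -> : (fun k => (exp_coeff t k)%:C *: Phi (iter k f x)) = Phi \o exp_terms f t x.
  by apply/funext => k; rewrite /= linearZ.
have /eqP <- : Phi (sexp f t x) == 0 by rewrite Phi0 orbitU.
exact: cvg_linear_sexp.
Qed.

Lemma sexp_reduction n (V : {vspace 'M[C]_n})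
    (P : {linear 'M[C]_n -> 'M[C]_n})
    (Rf : {linear 'M[C]_n -> 'rV[C]_(\dim V)})
    (Jf : {linear 'rV[C]_(\dim V) -> 'M[C]_n})
    (L : {linear 'M[C]_n -> 'M[C]_n}) x :
  proj_factors P Rf Jf -> (forall t, 0 <= t -> sexp L t x \in V) ->
  forall t, 0 <= t -> sexp L t x = Jf (sexp (fun y => Rf (L (Jf y))) t (Rf x)).
Proof.
case=> P_idem _ P_onto [_ JR _] orbitV t t0.
have JR_id v : v \in V -> Jf (Rf v) = v by case/P_onto => y <-; rewrite JR P_idem.
have krylovV k : iter k L x \in V.
  by apply: iter_memv_of_sexp_memv => s s0; apply: orbitV; exact: ltW.
pose F (y : 'rV[C]_(\dim V)) := Rf (L (Jf y)).
have iterF k : iter k F (Rf x) = Rf (iter k L x).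
  by elim: k => //= k ->; rewrite /F JR_id.
have termsF : exp_terms F t (Rf x) = Rf \o exp_terms L t x.
  by apply/funext => k; rewrite /= linearZ -iterF.
rewrite -/F [sexp F _ _]sexpE termsF.
rewrite (cvg_lim (@norm_hausdorff _ _) (@cvg_linear_sexp _ _ _ _ Rf L t x)).
by rewrite JR_id ?orbitV.
Qed.

Section ReachableSpace.
Variables (n : nat) (L : {linear 'M[C]_n -> 'M[C]_n}) (S : set 'M[C]_n).
Variable Rsp : {vspace 'M[C]_n}.
Hypothesis hRsp : forall x, x \in Rsp <-> reach_span L S x.

Lemma memv_reach_sexp t rho : S rho -> 0 <= t -> sexp L t rho \in Rsp.
Proof.
move=> Srho t0; apply/hRsp.
exists 1%N, (fun _ => 1), (fun _ => t), (fun _ => rho); split => //.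
by rewrite big_ord1 scale1r.
Qed.

Lemma reduction_exact_of_subv (V : {vspace 'M[C]_n})
    (P : {linear 'M[C]_n -> 'M[C]_n})
    (Rf : {linear 'M[C]_n -> 'rV[C]_(\dim V)})
    (Jf : {linear 'rV[C]_(\dim V) -> 'M[C]_n}) :
  (Rsp <= V)%VS -> proj_factors P Rf Jf -> reduction_exact L S Rf Jf.
Proof.
move=> RspV PRJ t rho t0 Srho; apply: sexp_reduction PRJ _ t t0 => s s0.
exact/(subvP RspV)/memv_reach_sexp.
Qed.

Lemma reach_subv_of_reduction_exact (W : {vspace 'M[C]_n})
    (Rf : {linear 'M[C]_n -> 'rV[C]_(\dim W)})
    (Jf : {linear 'rV[C]_(\dim W) -> 'M[C]_n}) :
  (forall y, Jf y \in W) -> reduction_exact L S Rf Jf -> (Rsp <= W)%VS.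
Proof.
move=> JW red; apply/subvP => x /hRsp [k [c [ts [rs [hyp ->]]]]].
apply: memv_suml => i _; apply: memvZ.
by have [t0 Sr] := hyp i; rewrite (red _ _ t0 Sr).
Qed.

End ReachableSpace.

Section BasisFactors.
Variables (n : nat) (U : {vspace 'M[C]_n}).

Definition basis_comb (y : 'rV[C]_(\dim U)) : 'M[C]_n :=
  \sum_(i < \dim U) y 0 i *: (vbasis U)`_i.

Lemma basis_comb_is_linear : linear basis_comb.
Proof.
move=> a x y; rewrite /basis_comb scaler_sumr -big_split; apply: eq_bigr => i _.
by rewrite !mxE scalerDl scalerA.
Qed.

HB.instance Definition _ := GRing.isLinear.Build C 'rV[C]_(\dim U) 'M[C]_n
  *:%R basis_comb basis_comb_is_linear.

Definition basis_coord (x : 'M[C]_n) : 'rV[C]_(\dim U) :=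
  \row_i coord (vbasis U) i (projv U x).

Lemma basis_coord_is_linear : linear basis_coord.
Proof. by move=> a x y; apply/rowP => i; rewrite !mxE !linearP. Qed.

HB.instance Definition _ := GRing.isLinear.Build C 'M[C]_n 'rV[C]_(\dim U)
  *:%R basis_coord basis_coord_is_linear.

Lemma basis_comb_memv y : basis_comb y \in U.
Proof.
apply: memv_suml => i _; apply/memvZ/vbasis_mem.
by apply: mem_nth; rewrite size_tuple.
Qed.

Lemma proj_factors_basis : proj_factors (projv U) basis_coord basis_comb.
Proof.
split.
- by move=> x; apply: projv_id; exact: memv_proj.
- exact: memv_proj.
- by move=> v vU; exists v; exact: projv_id.
split.
- exact: basis_comb_memv.
- move=> x; rewrite [RHS](coord_vbasis (memv_proj U x)).
  by apply: eq_bigr => i _; rewrite mxE.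
- move=> y; apply/rowP => i; rewrite mxE projv_id ?basis_comb_memv //.
  by rewrite coord_sum_free // (basis_free (vbasisP U)).
Qed.

End BasisFactors.

End ComplexMatrices.

Arguments basis_coord {R n} U.
Arguments basis_comb {R n} U.

Unset Implicit Arguments.

Theorem theorem1 (R : realType) (n : nat)
    (A : {vspace 'M[R[i]]_n}) (hA : star_subalgebra A)
    (Hm : 'M[R[i]]_n) (hHm : herm_mx Hm) (Ls : seq 'M[R[i]]_n)
    (hLA : forall x, x \in A -> lindblad Hm Ls x \in A)
    (S : set 'M[R[i]]_n) (hS : forall rho, S rho -> density rho /\ rho \in A)
    (Rsp : {vspace 'M[R[i]]_n})
    (hRsp : forall x, x \in Rsp <-> reach_span (lindblad Hm Ls) S x)
    (V : {vspace 'M[R[i]]_n}) (hRV : (Rsp <= V)%VS)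
    (P : {linear 'M[R[i]]_n -> 'M[R[i]]_n})
    (Rf : {linear 'M[R[i]]_n -> 'rV[R[i]]_(\dim V)})
    (Jf : {linear 'rV[R[i]]_(\dim V) -> 'M[R[i]]_n})
    (hPRJ : proj_factors P Rf Jf) :
  reduction_exact (lindblad Hm Ls) S Rf Jf /\
  (exists (P' : {linear 'M[R[i]]_n -> 'M[R[i]]_n})
          (Rf' : {linear 'M[R[i]]_n -> 'rV[R[i]]_(\dim Rsp)})
          (Jf' : {linear 'rV[R[i]]_(\dim Rsp) -> 'M[R[i]]_n}),
      proj_factors P' Rf' Jf' /\ reduction_exact (lindblad Hm Ls) S Rf' Jf') /\
  (forall (W : {vspace 'M[R[i]]_n})
          (P' : {linear 'M[R[i]]_n -> 'M[R[i]]_n})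
          (Rf' : {linear 'M[R[i]]_n -> 'rV[R[i]]_(\dim W)})
          (Jf' : {linear 'rV[R[i]]_(\dim W) -> 'M[R[i]]_n}),
      proj_factors P' Rf' Jf' -> reduction_exact (lindblad Hm Ls) S Rf' Jf' ->
      (\dim Rsp <= \dim W)%N).
Proof.
split; first exact: (reduction_exact_of_subv hRsp hRV hPRJ).
split.
  exists (projv Rsp), (basis_coord Rsp), (basis_comb Rsp).
  have PRJ := proj_factors_basis Rsp.
  by split; last exact: (reduction_exact_of_subv hRsp (subvv Rsp) PRJ).
move=> W P' Rf' Jf' [_ _ _ [JW _ _]] red; apply: dimvS.
exact: (reach_subv_of_reduction_exact hRsp JW red).
Qed.
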